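(* Let $G\subseteq W(\mathsf D_n)$ satisfy the (H1), relative minimality and minimality conditions, let $O=\{1,\dots,n'\}$ (after relabelling) be an orbit of $pr(G)$ on $\{1,\dots,n\}$, and let $\overline G_O=P_O(G)$, regarded as a subgroup of $W(\mathsf D_{n'})$ if $\sigma(g_O)=1$ for all $g\in G$ and as a subgroup of $W(\mathsf D_{n'+1})$ otherwise, acting on the corresponding lattice $\mathbb Z^{N+2}=\bigoplus_{i=-1}^{N}\mathbb Z\bar l_i$ ($N=n'$ resp. $N=n'+1$) via $\Phi$. Then $\overline G_O$ satisfies both the relative minimality condition and the (H1) condition.
   Context: For $m\ge1$, $W(\mathsf B_m)$ is the group of signed permutations of symbols $j^\pm$ ($1\le j\le m$), generated by $\mathfrak S_m$ and involutions $c_j$; elements are $c_{j_1}\cdots c_{j_t}\tau$; $pr(\cdot)=\tau$; $\sigma(\cdot)=(-1)^t$; $W(\mathsf D_m)=\ker\sigma$. Signed permutation cycles of $g$: $\beta_\gamma=(\prod_{j_i\in\mathrm{supp}\,\gamma}c_{j_i})\gamma$ for each cycle $\gamma$ of $\tau$ (fixed points included). $W(\mathsf D_m)$ acts on $\bigoplus_{i=-1}^m\mathbb Zl_i$ via $\Phi$: for $g=c_{j_1}\cdots c_{j_t}\tau$ with $s(i)=-1$ iff $i\in\{j_1,\dots,j_t\}$, $\Phi(g)l_0=l_0$, $\Phi(g)l_{-1}=l_{-1}+\frac t2l_0-\sum_{s(i)=-1}l_i$, and $\Phi(g)l_v=l_u$ or $l_0-l_u$ ($u=\tau^{-1}(v)$)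 according as $s(u)=1$ or $-1$; for $m=n$ this lattice is $\mathrm{Pic}(\bar X)$ of a standard conic bundle with $n$ degenerate fibers. A subgroup $H\subseteq W(\mathsf D_m)$ satisfies (H1) if $\mathrm H^1(H',\mathbb Z^{m+2})=0$ for all subgroups $H'\subseteq H$, and relative minimality if its invariants are $\mathbb Zl_0\oplus\mathbb ZK$, $K=-2(l_{-1}+l_0)+\sum_{i=1}^ml_i$. Minimality of $G$: $G$ corresponds to a $k$-minimal conic bundle; in particular for each $j$, $j^+$ and $j^-$ lie in one $G$-orbit. For $g\in G$, $g_O$ is the product of the signed permutation cycles of $g$ with underlying cycle in $O$, and $P_O(g)=g_Oc_{n'+1}$ if $\sigma(g_O)=-1$, $P_O(g)=g_O$ otherwise. *)

From HB Require Import structures.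
From mathcomp Require Import all_boot all_order all_algebra all_fingroup.
Set Implicit Arguments. Unset Strict Implicit. Unset Printing Implicit Defensive.
Import GRing.Theory.
Local Open Scope ring_scope.

(* The symbol j^+ is (j, true), the symbol j^- is (j, false).
   Group law: MathComp's  (g * h) x = h (g x)  (left-to-right composition);
   with this convention the map Phi below is a group homomorphism. *)

Definition sym (I : finType) := (I * bool)%type.
Definition sflip (I : finType) (x : sym I) : sym I := (x.1, ~~ x.2).

Definition WB (I : finType) : {set {perm sym I}} :=
  [set g : {perm sym I} | [forall x, g (sflip x) == sflip (g x)]].

Definition prf (I : finType) (g : {perm sym I}) (i : I) : I := (g (i, true)).1.
Definition flipped (I : finType) (g : {perm sym I}) : {set I} :=
  [set i : I | ~~ (g (i, true)).2].
Definition tcount (I : finType) (g : {perm sym I}) : nat := #|flipped g|.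
(* sigma(g) = -1  iff  sigma_odd g *)
Definition sigma_odd (I : finType) (g : {perm sym I}) : bool := odd (tcount g).

Definition WD (I : finType) : {set {perm sym I}} :=
  [set g in WB I | ~~ sigma_odd g].

(* The lattice  (+)_{i=-1}^{m} Z l_i :  None = l_{-1}, Some None = l_0,
   Some (Some i) = l_i  for i in I. *)
Definition lidx (I : finType) := option (option I).
Definition lat (I : finType) := {ffun lidx I -> int}.
Definition lscale (I : finType) (c : int) (x : {ffun lidx I -> int}) :
  {ffun lidx I -> int} := [ffun b => c * x b].
Definition lb (I : finType) (a : lidx I) : lat I := [ffun b => (a == b)%:Z].
Definition lm1 (I : finType) : lat I := lb (None : lidx I).
Definition l0 (I : finType) : lat I := lb (Some None : lidx I).
Definition li (I : finType) (i : I) : lat I := lb (Some (Some i)).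

Definition PhiImg (I : finType) (g : {perm sym I}) (a : lidx I) : lat I :=
  match a with
  | None => lm1 I + lscale ((tcount g %/ 2)%N%:Z) (l0 I)
              - \sum_(i in flipped g) li i
  | Some None => l0 I
  | Some (Some v) =>
      let p := (g^-1)%g (v, true) in   (* p.1 = u = tau^{-1}(v), p.2 <-> s(u) = 1 *)
      if p.2 then li p.1 else l0 I - li p.1
  end.

Definition Phi (I : finType) (g : {perm sym I}) (x : lat I) : lat I :=
  \sum_(a : lidx I) lscale (x a) (PhiImg g a).

Definition H1_zero (I : finType) (H : {set {perm sym I}}) : Prop :=
  forall f : {perm sym I} -> lat I,
    (forall g h, g \in H -> h \in H -> f (g * h)%g = f g + Phi g (f h)) ->
    exists x : lat I, forall g, g \in H -> f g = Phi g x - x.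

Definition condH1 (I : finType) (H : {set {perm sym I}}) : Prop :=
  forall H' : {group {perm sym I}}, H' \subset H -> H1_zero H'.

Definition Kcan (I : finType) : lat I :=
  lscale (-2) (lm1 I + l0 I) + \sum_(i : I) li i.

Definition relmin (I : finType) (H : {set {perm sym I}}) : Prop :=
  forall x : lat I, (forall g, g \in H -> Phi g x = x) <->
    exists a b : int, x = lscale a (l0 I) + lscale b (Kcan I).

Definition minimal_cond (I : finType) (H : {set {perm sym I}}) : Prop :=
  forall j : I, exists2 g, g \in H & g (j, true) = (j, false).

Definition pr_orbit (I : finType) (G : {set {perm sym I}}) (i0 : I) : {set I} :=
  [set prf g i0 | g in G].

Definition sO (I : finType) (O : {set I}) := {x : I | x \in O}.

Definition restr (I : finType) (O : {set I}) (g : {perm sym I})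
    (x : sym (sO O)) : sym (sO O) :=
  let y := g (val x.1, x.2) in (insubd x.1 y.1, y.2).

(* g_O  (injective as soon as O is stable under pr(g); 1 otherwise) *)
Definition gO (I : finType) (O : {set I}) (g : {perm sym I}) : {perm sym (sO O)} :=
  insubd (1%g : {perm sym (sO O)}) [ffun x => @restr I O g x].

(* P_O(g) = g_O c_{n'+1} if sigma(g_O) = -1, g_O otherwise;
   the extra index n'+1 is None *)
Definition POfun (I : finType) (O : {set I}) (g : {perm sym I})
    (x : sym (option (sO O))) : sym (option (sO O)) :=
  match x.1 with
  | Some k => let y := @gO I O g (k, x.2) in (Some y.1, y.2)
  | None => (None, x.2 (+) sigma_odd (@gO I O g))
  end.

Definition PO (I : finType) (O : {set I}) (g : {perm sym I})
  : {perm sym (option (sO O))} := insubd (1%g : {perm sym (option (sO O))}) [ffun x => @POfun I O g x].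

Definition GbarA (I : finType) (G : {set {perm sym I}}) (O : {set I})
  : {set {perm sym (sO O)}} := [set @gO I O g | g in G].
Definition GbarB (I : finType) (G : {set {perm sym I}}) (O : {set I})
  : {set {perm sym (option (sO O))}} := [set @PO I O g | g in G].

From mathcomp Require Import all_boot all_order all_algebra all_fingroup.
From mathcomp Require Import zify ring.
Set Implicit Arguments. Unset Strict Implicit. Unset Printing Implicit Defensive.
Import GRing.Theory.
Local Open Scope ring_scope.

(* Both quotients are images of G under a homomorphism P into signed
   permutations of an index set J, which an injection e : J -> option I
   identifies with the orbit O plus, for GbarB, one extra index mapped to None.

   Relative minimality: every index of J is fixed and flipped by some element of
   the image (by minimality of G, resp. by some g with sigma(g_O) = -1), and this
   forces x_{-1} = -2 x_j for every invariant x.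

   (H1): pull a cocycle on a subgroup of P(G) back to its preimage H in G.  Its
   l_{-1}-coordinate is a homomorphism to Z, hence 0, and its extra coordinate is
   c times the flip indicator of the extra index, which the coboundary of
   c l_{-1} removes.  Extended by zero to the lattice of I it is a cocycle of H,
   hence a coboundary Phi(g) x - x.  Restricting x to J requires the value
   -x_{-1}/2 at the extra index: if some g flips the extra index, then g flips an
   odd number of indices outside O, and 2 x_i + x_{-1} changes sign exactly along
   them, so it vanishes somewhere and x_{-1} is even.  What remains lies in
   Z l_0 and is a homomorphism, hence 0. *)

Lemma big_option (R : Type) (idx : R) (op : Monoid.com_law idx) (T : finType)
    (F : option T -> R) :
  \big[op/idx]_(o : option T) F o = op (F None) (\big[op/idx]_(t : T) F (Some t)).
Proof.
rewrite (bigD1 None) //= (reindex_omap Some id) => [|[]//].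
by congr (op _ _); apply: eq_bigl => t; rewrite eqxx.
Qed.

Lemma sum_mul_delta (T : finType) (w : T) (c : T -> int) :
  \sum_i c i * (i == w)%:Z = c w.
Proof.
rewrite (bigD1 w) //= eqxx mulr1 big1 ?addr0 // => i /negbTE ->.
by rewrite mulr0.
Qed.

Section SignedPermutations.
Variable I : finType.
Implicit Types g h : {perm sym I}.

Lemma WB_sflip g z : g \in WB I -> g (sflip z) = sflip (g z).
Proof. by rewrite inE => /forallP /(_ z) /eqP. Qed.

Lemma WB_apply g u b : g \in WB I -> g (u, b) = (prf g u, b (+) (u \in flipped g)).
Proof.
move=> gW; rewrite /prf inE; case: b; first by case: (g (u, true)) => a [].
by rewrite -[(u, false)]/(sflip (u, true)) WB_sflip //; case: (g (u, true)) => a [].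
Qed.

Lemma WB_mul g h : g \in WB I -> h \in WB I -> (g * h)%g \in WB I.
Proof. by move=> gW hW; rewrite inE; apply/forallP => z; rewrite !permM !WB_sflip. Qed.

Lemma WD_WB g : g \in WD I -> g \in WB I.
Proof. by rewrite inE => /andP[]. Qed.

Lemma WD_even g : g \in WD I -> ~~ odd (tcount g).
Proof. by rewrite inE => /andP[]. Qed.

Lemma WB_inv g u : g \in WB I -> (g^-1)%g (prf g u, true) = (u, u \notin flipped g).
Proof.
move=> gW; apply: (canLR (permK g)).
by rewrite WB_apply //; case: (u \in flipped g).
Qed.

Lemma prfK g : g \in WB I -> cancel (prf g) (prf g^-1%g).
Proof. by move=> gW u; have := WB_inv u gW; rewrite /prf => ->. Qed.

Lemma prf_inj g : g \in WB I -> injective (prf g).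
Proof. by move=> /prfK /can_inj. Qed.

Lemma prf_mul g h u : h \in WB I -> prf (g * h)%g u = prf h (prf g u).
Proof. by move=> hW; rewrite {1}/prf permM [g _]surjective_pairing WB_apply. Qed.

Lemma flipped_mul g h u : h \in WB I ->
  (u \in flipped (g * h)%g) = (u \in flipped g) (+) (prf g u \in flipped h).
Proof.
by move=> hW; rewrite [in LHS]inE permM [g _]surjective_pairing WB_apply //= !inE addNb.
Qed.

Lemma card_sum_mem (A : {set I}) : #|A| = (\sum_u (u \in A))%N.
Proof. by rewrite -sum1_card big_mkcond /=; apply: eq_bigr => u _; case: (u \in A). Qed.

Lemma tcount_mul g h : g \in WB I -> h \in WB I ->
  (tcount (g * h)%g + 2 * #|[set u in flipped g | prf g u \in flipped h]|
   = tcount g + tcount h)%N.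
Proof.
move=> gW hW; rewrite /tcount !card_sum_mem [X in (_ = _ + X)%N](reindex_inj (prf_inj gW)) /=.
rewrite big_distrr -!big_split /=; apply: eq_bigr => u _.
by rewrite flipped_mul // inE; case: (u \in flipped g); case: (prf g u \in flipped h).
Qed.

Lemma odd_tcount_mul g h : g \in WB I -> h \in WB I ->
  odd (tcount (g * h)%g) = odd (tcount g) (+) odd (tcount h).
Proof.
move=> gW hW; have := congr1 odd (tcount_mul gW hW).
by rewrite mul2n !oddD odd_double addbF.
Qed.

Lemma half_tcount_mul g h : g \in WD I -> h \in WD I ->
  (tcount (g * h)%g %/ 2)%N%:Z = (tcount g %/ 2)%N%:Z + (tcount h %/ 2)%N%:Z
     - #|[set u in flipped g | prf g u \in flipped h]|%:Z.
Proof.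
move=> gD hD; have := tcount_mul (WD_WB gD) (WD_WB hD).
have := modn2 (tcount g); have := modn2 (tcount h).
rewrite (negbTE (WD_even gD)) (negbTE (WD_even hD)).
by move: (tcount (g * h)%g) (tcount g) (tcount h) #|_| => c a b m; lia.
Qed.

End SignedPermutations.

Section Action.
Variable I : finType.
Implicit Types (g h : {perm sym I}) (x y : lat I).

Lemma lscaleE c x b : lscale c x b = c * x b.
Proof. by rewrite ffunE. Qed.

Lemma l0E b : l0 I b = (b == Some None)%:Z.
Proof. by rewrite ffunE; case: b => [[]|]. Qed.

Lemma sum_liE (A : {pred I}) b :
  (\sum_(i in A) li i) b = if b is Some (Some w) then (w \in A)%:Z else 0.
Proof.
rewrite sum_ffunE; case: b => [[w|]|]; last 2 first.
  1,2: by rewrite big1 // => i _; rewrite ffunE.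
rewrite big_mkcond -[RHS](sum_mul_delta w (fun i => (i \in A)%:Z)).
by apply: eq_bigr => i _; rewrite ffunE /=; case: (i \in A); rewrite ?mul1r ?mul0r.
Qed.

Lemma PhiE g x b : g \in WB I -> Phi g x b =
  x None * PhiImg g None b + x (Some None) * l0 I b
  + \sum_u x (Some (Some (prf g u))) * (if u \in flipped g then l0 I - li u else li u) b.
Proof.
move=> gW; rewrite /Phi sum_ffunE !big_option /= !ffunE addrA.
congr (_ + _); rewrite (reindex_inj (prf_inj gW)); apply: eq_bigr => u _.
by rewrite ffunE /= WB_inv //; case: (u \in flipped g).
Qed.

Lemma Phi_m1 g x : g \in WB I -> Phi g x None = x None.
Proof.
move=> gW; rewrite PhiE //= !ffunE sum_liE /= big1 => [|u _]; first by ring.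
by case: (u \in flipped g); rewrite !ffunE /= mulr0.
Qed.

Lemma Phi_0 g x : g \in WB I -> Phi g x (Some None) =
  x (Some None) + x None * (tcount g %/ 2)%N%:Z
  + \sum_(u in flipped g) x (Some (Some (prf g u))).
Proof.
move=> gW; rewrite PhiE //= !ffunE sum_liE /= [in RHS]big_mkcond /=.
rewrite (eq_bigr (fun u => if u \in flipped g then x (Some (Some (prf g u))) else 0)).
  by ring.
by move=> u _; case: (u \in flipped g); rewrite !ffunE /= ?subr0 ?mulr1 ?mulr0.
Qed.

Lemma Phi_i g x w : g \in WB I -> Phi g x (Some (Some w)) =
  if w \in flipped g then - x None - x (Some (Some (prf g w))) else x (Some (Some (prf g w))).
Proof.
move=> gW; rewrite PhiE //= !ffunE sum_liE /= mulr0 addr0.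
rewrite (eq_bigr (fun u => (x (Some (Some (prf g u))) * (-1) ^+ (u \in flipped g)) * (u == w)%:Z)).
  by rewrite sum_mul_delta; case: (w \in flipped g); rewrite /= ?mulr1; ring.
by move=> u _; case: (u \in flipped g); rewrite !ffunE /=; ring.
Qed.

Lemma PhiD g x y : Phi g (x + y) = Phi g x + Phi g y.
Proof.
rewrite /Phi -big_split; apply: eq_bigr => a _.
by apply/ffunP => b; rewrite !ffunE mulrDl.
Qed.

Lemma PhiN g x : Phi g (- x) = - Phi g x.
Proof.
rewrite /Phi -sumrN; apply: eq_bigr => a _.
by apply/ffunP => b; rewrite !ffunE mulNr.
Qed.

Lemma PhiB g x y : Phi g (x - y) = Phi g x - Phi g y.
Proof. by rewrite PhiD PhiN. Qed.

Lemma PhiZ g c x : Phi g (lscale c x) = lscale c (Phi g x).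
Proof.
apply/ffunP => b; rewrite /Phi !(ffunE, sum_ffunE) mulr_sumr.
by apply: eq_bigr => a _; rewrite !ffunE mulrA.
Qed.

Lemma Phi_mul g h x : g \in WD I -> h \in WD I ->
  Phi (g * h)%g x = Phi g (Phi h x).
Proof.
move=> gD hD; have [gW hW] := (WD_WB gD, WD_WB hD); have ghW := WB_mul gW hW.
apply/ffunP => -[[w|]|]; last by rewrite !Phi_m1.
  rewrite !Phi_i // Phi_m1 // flipped_mul // prf_mul //.
  by case: (w \in flipped g); case: (prf g w \in flipped h) => /=; ring.
rewrite !Phi_0 // Phi_m1 // half_tcount_mul // card_sum_mem.
rewrite (big_morph Posz PoszD (erefl _)) mulrBr mulrDr big_distrr /=.
rewrite !(big_mkcond (fun u => u \in flipped _)) /=.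
rewrite [X in _ = _ + _ + X + _ + _](reindex_inj (prf_inj gW)) /=.
suff -> : \sum_u (if u \in flipped (g * h) then x (Some (Some (prf (g * h) u))) else 0) =
    \sum_u (if prf g u \in flipped h then x (Some (Some (prf h (prf g u)))) else 0)
    + \sum_u (if u \in flipped g then Phi h x (Some (Some (prf g u))) else 0)
    + \sum_u x None * (u \in [set u in flipped g | prf g u \in flipped h])%:Z by ring.
rewrite -!big_split; apply: eq_bigr => u _ /=.
rewrite inE flipped_mul // prf_mul // Phi_i //.
by case: (u \in flipped g); case: (prf g u \in flipped h) => /=; ring.
Qed.

Lemma Phi_l0 g : g \in WB I -> Phi g (l0 I) = l0 I.
Proof.
move=> gW; apply/ffunP => -[[w|]|]; last by rewrite Phi_m1.
  by rewrite Phi_i // !ffunE; case: (w \in flipped g); rewrite /= ?subr0.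
by rewrite Phi_0 // !ffunE /= big1 => [|u _]; rewrite ?ffunE // mul0r !addr0.
Qed.

Lemma KcanE b : Kcan I b = if b is Some (Some _) then 1 else -2.
Proof. by rewrite ffunE sum_liE !ffunE; case: b => [[w|]|] /=; ring. Qed.

Lemma Phi_Kcan g : g \in WD I -> Phi g (Kcan I) = Kcan I.
Proof.
move=> gD; have gW := WD_WB gD; apply/ffunP => -[[w|]|]; last by rewrite Phi_m1.
  by rewrite Phi_i // !KcanE; case: (w \in flipped g); ring.
rewrite Phi_0 // !KcanE (eq_bigr (fun _ => 1)) => [|u _]; last by rewrite KcanE.
have tE : (tcount g)%:R = 2 * (tcount g %/ 2)%N%:R :> int.
  by rewrite -natrM mulnC divnK // dvdn2 (WD_even gD).
by rewrite sumr_const -/(tcount g) tE; ring.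
Qed.

Lemma relmin_of_flips (H : {set {perm sym I}}) (j0 : I) : H \subset WD I ->
  (forall j, exists2 h, h \in H & prf h j = j /\ j \in flipped h) -> relmin H.
Proof.
move=> sHD flips x; split=> [fixed | [a [b ->]] h hH]; last first.
  have hD := subsetP sHD h hH.
  by rewrite PhiD !PhiZ Phi_l0 ?WD_WB // Phi_Kcan.
have m1E j : x None = - 2 * x (Some (Some j)).
  have [h hH [hj fj]] := flips j; have hW := WD_WB (subsetP sHD h hH).
  have := congr1 (fun y => y (Some (Some j))) (fixed h hH).
  by rewrite /= Phi_i // fj hj; move: (x None) (x _) => a b; lia.
have xiE j : x (Some (Some j)) = x (Some (Some j0)).
  by have := m1E j; rewrite (m1E j0); move: (x _) (x _) => a b; lia.
exists (x (Some None) + 2 * x (Some (Some j0))), (x (Some (Some j0))).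
apply/ffunP => -[[w|]|]; rewrite ffunE !lscaleE KcanE l0E /=; last by rewrite (m1E j0); ring.
  by rewrite xiE; ring.
by ring.
Qed.

End Action.

Lemma expg_additive_eq0 (gT : finGroupType) (g : gT) (k : gT -> int) : k 1%g = 0 ->
  (forall m, k (g * g ^+ m)%g = k g + k (g ^+ m)%g) -> k g = 0.
Proof.
move=> k1 kM; have kX m : k (g ^+ m)%g = m%:Z * k g.
  by elim: m => [|m IH]; rewrite ?expg0 ?k1 ?mul0r // expgS kM IH -addn1 PoszD; ring.
have := kX #[g]%g; rewrite expg_order k1 => /esym /eqP; rewrite mulf_eq0.
by case/orP=> /eqP // n0; have := order_gt0 g; lia.
Qed.

Section IntegerCocycles.
Variables (gT : finGroupType) (H : {group gT}).

Lemma sign_cocycle_int (s : gT -> bool) (k : gT -> int) :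
    {in H &, forall g h, s (g * h)%g = s g (+) s h} ->
    {in H &, forall g h, k (g * h)%g = k g + (-1) ^+ s g * k h} ->
  exists c : int, {in H, forall g, k g = c * (s g)%:Z}.
Proof.
move=> sM kM; have s1 : s 1%g = false.
  by have := sM _ _ (group1 H) (group1 H); rewrite mulg1 addbb.
have k1 : k 1%g = 0.
  by have := kM _ _ (group1 H) (group1 H); rewrite mulg1 s1 /= mul1r; move: (k _); lia.
have k_even g : g \in H -> ~~ s g -> k g = 0.
  move=> gH /negbTE sg; apply: (expg_additive_eq0 k1) => m.
  have sX : s (g ^+ m)%g = false.
    by elim: m => [|m IH]; rewrite ?expg0 // expgS sM ?groupX // sg IH.
  by rewrite kM ?groupX // sg expr0 mul1r.
case: (pickP [pred g in H | s g]) => [g0 /andP[g0H sg0] | no_odd].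
  exists (k g0) => g gH; case sg: (s g); last by rewrite k_even ?sg // mulr0.
  have := kM _ _ gH g0H; rewrite k_even ?groupM ?sM ?sg ?sg0 //.
  by rewrite expr1 mulr1 mulN1r; move: (k g) (k g0); lia.
exists 0 => g gH; rewrite mul0r k_even //.
by apply/negP => sg; have := no_odd g; rewrite /= gH sg.
Qed.

Lemma additive_int_eq0 (k : gT -> int) :
  {in H &, forall g h, k (g * h)%g = k g + k h} -> {in H, forall g, k g = 0}.
Proof.
move=> kM; have [|c kE] := @sign_cocycle_int (fun _ => false) k (fun _ _ _ _ => erefl).
  by move=> g h gH hH; rewrite kM // expr0 mul1r.
by move=> g gH; rewrite kE // mulr0.
Qed.

End IntegerCocycles.

Lemma odd_signs_prod_eq0 (T : finType) (A : {pred T}) (f : T -> T) (s : T -> bool)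
    (d : T -> int) :
    injective f -> (forall i, (f i \in A) = (i \in A)) ->
    {in A, forall i, d i = (-1) ^+ s i * d (f i)} -> odd (\sum_(i in A) s i) ->
  exists2 i, i \in A & d i = 0.
Proof.
move=> f_inj fA dE odd_s.
have dfE : \prod_(i in A) d (f i) = \prod_(i in A) d i.
  by rewrite [RHS](reindex_inj f_inj); apply: eq_bigl => i; rewrite fA.
have prod_opp : \prod_(i in A) d i = - \prod_(i in A) d i.
  by rewrite {1}(eq_bigr _ dE) big_split /= prodrXr -signr_odd odd_s dfE mulN1r.
have /prodf_eq0[i iA /eqP di0] : \prod_(i in A) d i == 0.
  by move: (\prod_(i in A) d i) prod_opp => p; lia.
by exists i.
Qed.

Section Transfer.
Variables (I J : finType) (G : {group {perm sym I}}).
Variables (P : {morphism G >-> {perm sym J}}) (e : J -> option I).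
Hypothesis sGD : G \subset WD I.
Hypothesis P_WD : {in G, forall g, P g \in WD J}.
(* By injectivity, at most one index of J (the extra index) is mapped to None. *)
Hypothesis e_inj : injective e.
Hypothesis e_prf : forall g j, g \in G -> e (prf (P g) j) = omap (prf g) (e j).
Hypothesis e_flipped : forall g j i, g \in G -> e j = Some i ->
  (j \in flipped (P g)) = (i \in flipped g).

Implicit Types (g h : {perm sym I}) (x : lat I) (y z : lat J).

Let G_WB g : g \in G -> g \in WB I.
Proof. by move=> gG; apply/WD_WB/(subsetP sGD). Qed.

Let P_WB g : g \in G -> P g \in WB J.
Proof. by move=> gG; apply/WD_WB/P_WD. Qed.

Definition einv (i : I) : option J := [pick j | e j == Some i].

Lemma einv_Some i j : e j = Some i -> einv i = Some j.
Proof.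
rewrite /einv => ej; case: pickP => [j' /eqP ej'|/(_ j)]; last by rewrite ej eqxx.
by congr Some; apply: e_inj; rewrite ej ej'.
Qed.

Lemma e_einv i j : einv i = Some j -> e j = Some i.
Proof. by rewrite /einv; case: pickP => [j' /eqP ej' [<-] | //]. Qed.

Lemma e_None_eq j1 j2 : e j1 = None -> e j2 = None -> j1 = j2.
Proof. by move=> e1 e2; apply: e_inj; rewrite e1 e2. Qed.

Lemma prf_extra g j : g \in G -> e j = None -> prf (P g) j = j.
Proof. by move=> gG ej; apply: e_inj; rewrite e_prf // ej. Qed.

Lemma einv_prf g i : g \in G -> einv (prf g i) = omap (prf (P g)) (einv i).
Proof.
move=> gG; case Ei: (einv i) => [j|] /=.
  by apply: einv_Some; rewrite e_prf // (e_einv Ei).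
case Eg: (einv (prf g i)) => [j|] //.
have := e_prf j (groupVr gG); rewrite (e_einv Eg) /= prfK ?G_WB //.
by move/einv_Some; rewrite Ei.
Qed.

Lemma big_einv (R : Type) (idx : R) (op : Monoid.com_law idx) (w : J -> R) :
    (forall j, e j = None -> w j = idx) ->
  \big[op/idx]_j w j = \big[op/idx]_i oapp w idx (einv i).
Proof.
move=> w0; pose F o := if o is Some i then oapp w idx (einv i) else idx.
have wE j : w j = F (e j).
  by case Ej: (e j) => [i|]; [rewrite /F (einv_Some Ej) | rewrite w0].
rewrite (eq_bigr _ (fun j _ => wE j)) -(big_imset _ (in2W e_inj)) /= big_mkcond.
rewrite big_option /= if_same Monoid.mul1m; apply: eq_bigr => i _.
case: ifP => // /negbT iNe; case Ei: (einv i) => [j|] //=.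
by case/imsetP: iNe; exists j; rewrite ?(e_einv Ei).
Qed.

Definition lat_extend (y : lat J) : lat I := [ffun b => match b with
  | None => y None
  | Some None => y (Some None)
  | Some (Some i) => oapp (fun j => y (Some (Some j))) 0 (einv i)
  end].

Definition lat_restrict (x : lat I) (c : int) : lat J := [ffun b => match b with
  | None => x None
  | Some None => x (Some None)
  | Some (Some j) => oapp (fun i => x (Some (Some i))) c (e j)
  end].

Lemma lat_extendD y z : lat_extend (y + z) = lat_extend y + lat_extend z.
Proof.
apply/ffunP => -[[i|]|]; rewrite !ffunE //=.
by case: (einv i) => [j|] /=; rewrite ?ffunE ?addr0.
Qed.

Lemma Phi_extend g y : g \in G -> y None = 0 ->
    (forall j, e j = None -> y (Some (Some j)) = 0) ->
  lat_extend (Phi (P g) y) = Phi g (lat_extend y).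
Proof.
move=> gG y_m1 y_extra; have [gW PgW] := (G_WB gG, P_WB gG).
apply/ffunP => -[[i|]|]; last by rewrite Phi_m1 // !ffunE /= Phi_m1.
  rewrite Phi_i // !ffunE /= einv_prf // y_m1 sub0r.
  case Ei: (einv i) => [j|] /=; last by case: (i \in flipped g); rewrite ?oppr0.
  by rewrite Phi_i // y_m1 sub0r (e_flipped gG (e_einv Ei)).
rewrite ffunE /= !Phi_0 // !ffunE /= y_m1 !mul0r !addr0.
pose w j := if j \in flipped (P g) then y (Some (Some (prf (P g) j))) else 0.
rewrite [in LHS]big_mkcond (@big_einv _ _ _ w) => [|j ej]; last first.
  by rewrite /w prf_extra // y_extra //; case: ifP.
congr (_ + _); rewrite [in RHS]big_mkcond; apply: eq_bigr => i _ /=.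
rewrite !ffunE /= einv_prf //; case Ei: (einv i) => [j|] /=; last by case: ifP.
by rewrite /w (e_flipped gG (e_einv Ei)).
Qed.

Lemma tcount_transfer g : g \in G ->
  (tcount (P g) + \sum_(i | einv i == None) (i \in flipped g)
   = tcount g + \sum_(j | e j == None) (j \in flipped (P g)))%N.
Proof.
move=> gG; rewrite /tcount !card_sum_mem.
rewrite [X in (X + _)%N](bigID (fun j => e j == None)) /=.
rewrite [X in (_ = X + _)%N](bigID (fun i => einv i == None)) /=.
suff -> : (\sum_(j | e j != None) (j \in flipped (P g))
           = \sum_(i | einv i != None) (i \in flipped g))%N by ring.
rewrite [LHS]big_mkcond [RHS]big_mkcond.
rewrite (@big_einv _ _ _ (fun j => if e j != None then nat_of_bool (j \in flipped (P g)) else 0%N))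
  => [|j ->] //.
apply: eq_bigr => i _; case Ei: (einv i) => [j|] //=.
by rewrite (e_einv Ei) (e_flipped gG (e_einv Ei)).
Qed.

Lemma odd_outside_flips g j : g \in G -> e j = None -> j \in flipped (P g) ->
  odd (\sum_(i | einv i == None) (i \in flipped g)).
Proof.
move=> gG ej fj; have := congr1 odd (tcount_transfer gG).
rewrite (big_pred1 j) => [|j']; last by apply/eqP/eqP => [/e_None_eq/(_ ej)|->].
rewrite fj !oddD (negbTE (WD_even (P_WD gG))) (negbTE (WD_even (subsetP sGD g gG))).
by case: odd.
Qed.

Lemma m1_even_of_extra_flip g j x : g \in G -> e j = None -> j \in flipped (P g) ->
    (forall i, einv i = None -> Phi g x (Some (Some i)) = x (Some (Some i))) ->
  exists a, x None = 2 * a.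
Proof.
move=> gG ej fj x_fixed; have gW := G_WB gG.
have [i _ di0] : exists2 i, i \in [pred i | einv i == None] &
    2 * x (Some (Some i)) + x None = 0.
  apply: (@odd_signs_prod_eq0 _ _ (prf g) (fun i => i \in flipped g)
    (fun i => 2 * x (Some (Some i)) + x None)) => [|i|i /eqP Ei|].
- exact: prf_inj gW.
- by rewrite !inE einv_prf //; case: einv.
- rewrite -{1}(x_fixed i Ei) Phi_i //.
  by case: (i \in flipped g); rewrite /= ?expr1 ?expr0; ring.
- exact: (odd_outside_flips gG ej fj).
by exists (- x (Some (Some i))); move: di0; move: (x _) (x _) => a b; lia.
Qed.

Lemma restrict_coboundary_l0 g (u : lat J) x c : g \in G ->
    u None = 0 -> (forall j, e j = None -> u (Some (Some j)) = 0) ->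
    lat_extend u = Phi g x - x ->
    (forall j, e j = None -> j \in flipped (P g) -> 2 * c + x None = 0) ->
  u - (Phi (P g) (lat_restrict x c) - lat_restrict x c)
    = lscale ((u - (Phi (P g) (lat_restrict x c) - lat_restrict x c)) (Some None)) (l0 J).
Proof.
move=> gG u_m1 u_extra uE cE; have [gW PgW] := (G_WB gG, P_WB gG).
apply/ffunP => -[[j|]|]; rewrite lscaleE l0E /= ?mulr1 ?mulr0 //; last first.
  by rewrite !ffunE Phi_m1 // !ffunE u_m1 /= subrr subr0.
rewrite !ffunE Phi_i // !ffunE /=; case Ej: (e j) => [i|] /=; last first.
  rewrite prf_extra // u_extra // Ej /=; case: ifP => [fj|_]; last by rewrite !subrr.
  by have := cE j Ej fj; move: (x None) => a; lia.
have := congr1 (fun v : lat I => v (Some (Some i))) uE.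
rewrite /= !ffunE /= (einv_Some Ej) /= Phi_i // e_prf // Ej /= (e_flipped gG Ej) => ->.
by case: (i \in flipped g); ring.
Qed.

Section Cocycles.
Variables (H : {group {perm sym I}}) (phi : {perm sym I} -> lat J).
Hypothesis sHG : H \subset G.
Hypothesis phi_cocycle :
  {in H &, forall g h, phi (g * h)%g = phi g + Phi (P g) (phi h)}.

Let PH_WB g : g \in H -> P g \in WB J.
Proof. by move=> gH; apply/P_WB/(subsetP sHG). Qed.

Lemma cocycle_m1 : {in H, forall g, phi g None = 0}.
Proof.
apply: additive_int_eq0 => g h gH hH.
by rewrite phi_cocycle // ffunE Phi_m1 // PH_WB.
Qed.

Lemma cocycle_extra : exists c : int, forall g j, g \in H -> e j = None ->
  phi g (Some (Some j)) = c * (j \in flipped (P g))%:Z.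
Proof.
case: (pickP (fun j => e j == None)) => [j0 /eqP ej0 | no_extra]; last first.
  by exists 0 => g j _ ej; have := no_extra j; rewrite ej eqxx.
have [||c cE] := @sign_cocycle_int _ H (fun g => j0 \in flipped (P g))
  (fun g => phi g (Some (Some j0))).
- move=> g h gH hH /=; rewrite morphM ?(subsetP sHG) // flipped_mul ?PH_WB //.
  by rewrite prf_extra ?(subsetP sHG).
- move=> g h gH hH; rewrite phi_cocycle // ffunE Phi_i ?PH_WB // cocycle_m1 //.
  rewrite prf_extra ?(subsetP sHG) //.
  by case: (j0 \in flipped (P g)); rewrite /= ?expr1 ?expr0; ring.
by exists c => g j gH /e_None_eq/(_ ej0) ->; apply: cE.
Qed.

Lemma normalized_cocycle_coboundary : H1_zero H ->
    (forall g j, g \in H -> e j = None -> phi g (Some (Some j)) = 0) ->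
  exists y, {in H, forall g, phi g = Phi (P g) y - y}.
Proof.
move=> H1H phi_extra.
have [x xE] : exists x, {in H, forall g, lat_extend (phi g) = Phi g x - x}.
  apply: H1H => g h gH hH; rewrite phi_cocycle // lat_extendD.
  by rewrite Phi_extend ?(subsetP sHG) ?cocycle_m1 // => j; apply: phi_extra.
have [c cE] : exists c : int, forall g j, g \in H -> e j = None ->
    j \in flipped (P g) -> 2 * c + x None = 0.
  case: (boolP [exists g in H, [exists j, (e j == None) && (j \in flipped (P g))]]).
    case/exists_inP => g gH /existsP[j /andP[/eqP ej fj]].
    have [|a ->] := m1_even_of_extra_flip (x := x) (subsetP sHG g gH) ej fj.
      move=> i Ei; have := congr1 (fun v : lat I => v (Some (Some i))) (xE g gH).
      by rewrite !ffunE /= Ei => /esym/eqP; rewrite subr_eq0 => /eqP.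
    by exists (- a) => *; ring.
  move=> no_flip; exists 0 => g j gH ej fj; case/negP: no_flip.
  by apply/exists_inP; exists g => //; apply/existsP; exists j; rewrite ej eqxx.
pose y := lat_restrict x c; pose D g := phi g - (Phi (P g) y - y).
have D_l0 g : g \in H -> D g = lscale (D g (Some None)) (l0 J).
  move=> gH; apply: restrict_coboundary_l0; rewrite ?(subsetP sHG) ?cocycle_m1 ?xE //.
  - by move=> j; apply: phi_extra.
  - by move=> j; apply: cE.
have D_cocycle : {in H &, forall g h, D (g * h)%g = D g + Phi (P g) (D h)}.
  move=> g h gH hH; have [gG hG] := (subsetP sHG g gH, subsetP sHG h hH).
  rewrite /D phi_cocycle // morphM // Phi_mul ?P_WD // !PhiB.
  by apply/ffunP => b; rewrite !ffunE; ring.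
have D0 : {in H, forall g, D g (Some None) = 0}.
  apply: additive_int_eq0 => g h gH hH.
  by rewrite D_cocycle // ffunE [D h]D_l0 // PhiZ Phi_l0 ?PH_WB // lscaleE l0E mulr1.
exists y => g gH; apply/eqP; rewrite -subr_eq0 -/(D g) D_l0 // D0 //.
by apply/eqP/ffunP => b; rewrite !ffunE mul0r.
Qed.

End Cocycles.

Lemma transfer_H1 : condH1 G -> condH1 [set P g | g in G].
Proof.
move=> H1G K sKP f f_cocycle; pose H := (P @*^-1 K)%G.
have memH g : g \in H -> g \in G /\ P g \in K by move/morphpreP.
have sHG : H \subset G by apply/subsetP => g /memH[].
have phi_cocycle : {in H &, forall g h, f (P (g * h)%g) = f (P g) + Phi (P g) (f (P h))}.
  move=> g h /memH[gG gK] /memH[hG hK]; rewrite morphM //; exact: f_cocycle.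
have [c cE] := cocycle_extra sHG phi_cocycle.
pose L := lm1 J; pose phi g := f (P g) + lscale c (Phi (P g) L - L).
have [||y yE] := @normalized_cocycle_coboundary H phi sHG _ (H1G H sHG).
- move=> g h gH hH; have [[gG _] [hG _]] := (memH g gH, memH h hH).
  rewrite /phi phi_cocycle // morphM // Phi_mul ?P_WD // PhiD PhiZ !PhiB.
  by apply/ffunP => b; rewrite !ffunE; ring.
- move=> g j gH ej; have PgW := P_WB (subsetP sHG g gH).
  rewrite /phi !ffunE cE // Phi_i // !ffunE prf_extra ?(subsetP sHG) //=.
  by case: (j \in flipped (P g)) => /=; ring.
exists (y - lscale c L) => h hK; have /imsetP[g gG hE] := subsetP sKP h hK.
have gH : g \in H by rewrite mem_morphpre -?hE.
rewrite hE; have -> : f (P g) = phi g - lscale c (Phi (P g) L - L) by rewrite addrK.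
rewrite yE // PhiB PhiZ.
by apply/ffunP => b; rewrite !ffunE; ring.
Qed.

Lemma transfer_relmin (j0 : J) : minimal_cond G ->
    (forall j, e j = None -> exists2 g, g \in G & j \in flipped (P g)) ->
  relmin [set P g | g in G].
Proof.
move=> Gmin extra_flip; apply: (relmin_of_flips j0).
  by apply/subsetP => _ /imsetP[g gG ->]; apply: P_WD.
move=> j; case Ej: (e j) => [i|]; last first.
  have [g gG fj] := extra_flip j Ej.
  by exists (P g); [apply: imset_f | rewrite prf_extra].
have [g gG gi] := Gmin i.
have [gi_fix fi] : prf g i = i /\ i \in flipped g by rewrite /prf inE gi.
exists (P g); first exact: imset_f.
split; last by rewrite (e_flipped gG Ej).
by apply: e_inj; rewrite e_prf // Ej /= gi_fix.
Qed.

End Transfer.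

Lemma insubd_permE (T : finType) (f : T -> T) x : injective f ->
  (insubd (1%g : {perm T}) [ffun y => f y] : {perm T}) x = f x.
Proof.
move=> f_inj; have f_injb : injectiveb [ffun y => f y].
  by apply/injectiveP => y z; rewrite !ffunE => /f_inj.
by rewrite -pvalE insubdK // ffunE.
Qed.

Section OrbitRestriction.
Variables (I : finType) (G : {group {perm sym I}}) (O : {set I}).
Hypothesis sGD : G \subset WD I.
Hypothesis O_stable : forall g i, g \in G -> i \in O -> prf g i \in O.
Implicit Types (g h : {perm sym I}) (k : sO O).

Let G_WB g : g \in G -> g \in WB I.
Proof. by move=> gG; apply/WD_WB/(subsetP sGD). Qed.

Lemma val_insubd_prf g k : g \in G -> val (insubd k (prf g (val k))) = prf g (val k).
Proof. by move=> gG; rewrite insubdK ?inE ?O_stable ?(valP k). Qed.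

Lemma restr_apply g k b : g \in G ->
  restr g (k, b) = (insubd k (prf g (val k)), b (+) (val k \in flipped g)).
Proof. by move=> gG; rewrite /restr /= WB_apply ?G_WB. Qed.

Lemma restr_inj g : g \in G -> injective (@restr I O g).
Proof.
move=> gG [k1 b1] [k2 b2]; rewrite !restr_apply // => -[/(congr1 val)].
rewrite !val_insubd_prf // => /(prf_inj (G_WB gG))/val_inj <-.
by move/addIb ->.
Qed.

Lemma gO_apply g k b : g \in G ->
  gO O g (k, b) = (insubd k (prf g (val k)), b (+) (val k \in flipped g)).
Proof. by move=> gG; rewrite insubd_permE ?restr_apply //; apply: restr_inj. Qed.

Lemma val_prf_gO g k : g \in G -> val (prf (gO O g) k) = prf g (val k).
Proof. by move=> gG; rewrite /prf gO_apply //= val_insubd_prf. Qed.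

Lemma flipped_gO g k : g \in G -> (k \in flipped (gO O g)) = (val k \in flipped g).
Proof. by move=> gG; rewrite [in LHS]inE gO_apply //=; case: (_ \in _). Qed.

Lemma gO_WB g : g \in G -> gO O g \in WB (sO O).
Proof.
move=> gG; rewrite inE; apply/forallP => -[k b].
by rewrite /sflip /= !gO_apply //= addNb.
Qed.

Lemma gO_morphM : {in G &, {morph gO O : g h / (g * h)%g}}.
Proof.
move=> g h gG hG; apply/permP => -[k b]; rewrite permM !gO_apply ?groupM //.
congr (_, _).
  by apply: val_inj; rewrite !insubdK ?O_stable ?groupM ?(valP k) // prf_mul ?G_WB.
by rewrite flipped_mul ?G_WB // val_insubd_prf // addbA.
Qed.

Lemma sigma_gO_mul g h : g \in G -> h \in G ->
  sigma_odd (gO O (g * h)%g) = sigma_odd (gO O g) (+) sigma_odd (gO O h).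
Proof. by move=> gG hG; rewrite /sigma_odd gO_morphM // odd_tcount_mul ?gO_WB. Qed.

Lemma POfun_inj g : injective (@POfun I O g).
Proof.
move=> [[k1|] b1] [[k2|] b2]; rewrite /POfun /= => -[] //.
  move=> k12 b12; have : gO O g (k1, b1) = gO O g (k2, b2).
    by rewrite [LHS]surjective_pairing [RHS]surjective_pairing k12 b12.
  by move/perm_inj => [-> ->].
by move/addIb ->.
Qed.

Lemma PO_Some g k b : g \in G ->
  PO O g (Some k, b) = (Some (insubd k (prf g (val k))), b (+) (val k \in flipped g)).
Proof. by move=> gG; rewrite insubd_permE /POfun /= ?gO_apply //; apply: POfun_inj. Qed.

Lemma PO_None g b : PO O g (None, b) = (None, b (+) sigma_odd (gO O g)).
Proof. by rewrite insubd_permE //; apply: POfun_inj. Qed.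

Lemma PO_WD g : g \in G -> PO O g \in WD (option (sO O)).
Proof.
move=> gG; rewrite !inE; apply/andP; split.
  by apply/forallP => -[[k|] b]; rewrite /sflip /= ?PO_Some ?PO_None //= addNb.
rewrite /sigma_odd /tcount card_sum_mem big_option /= inE PO_None /= negbK.
have -> : (\sum_k ((Some k : option (sO O)) \in flipped (PO O g)))%N = tcount (gO O g).
  by rewrite /tcount card_sum_mem; apply: eq_bigr => k _; rewrite !inE PO_Some // gO_apply.
by rewrite oddD oddb addbb.
Qed.

Lemma PO_morphM : {in G &, {morph PO O : g h / (g * h)%g}}.
Proof.
move=> g h gG hG; apply/permP => -[[k|] b]; rewrite permM; last first.
  by rewrite !PO_None sigma_gO_mul // addbA.
rewrite !PO_Some ?groupM //; congr (Some _, _).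
  by apply: val_inj; rewrite !insubdK ?O_stable ?groupM ?(valP k) // prf_mul ?G_WB.
by rewrite flipped_mul ?G_WB // val_insubd_prf // addbA.
Qed.

Hypotheses (H1G : condH1 G) (Gmin : minimal_cond G).

Lemma GbarA_relmin_H1 (k0 : sO O) : {in G, forall g, ~~ sigma_odd (gO O g)} ->
  relmin (GbarA G O) /\ condH1 (GbarA G O).
Proof.
move=> even_gO; pose P := Morphism gO_morphM.
pose e (k : sO O) : option I := Some (val k).
have e_inj : injective e by move=> k1 k2 [/val_inj].
have P_WD : {in G, forall g, P g \in WD (sO O)}.
  by move=> g gG; rewrite inE gO_WB ?even_gO.
have e_prf g k : g \in G -> e (prf (P g) k) = omap (prf g) (e k).
  by move=> gG; rewrite /e val_prf_gO.
have e_flipped g k i : g \in G -> e k = Some i -> (k \in flipped (P g)) = (i \in flipped g).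
  by move=> gG [<-]; apply: flipped_gO.
split; first exact: (transfer_relmin P_WD e_inj e_prf e_flipped k0 Gmin).
exact: (transfer_H1 sGD P_WD e_inj e_prf e_flipped H1G).
Qed.

Lemma GbarB_relmin_H1 : (exists2 g, g \in G & sigma_odd (gO O g)) ->
  relmin (GbarB G O) /\ condH1 (GbarB G O).
Proof.
move=> [g_odd g_oddG odd_g]; pose P := Morphism PO_morphM.
pose e (o : option (sO O)) : option I := omap val o.
have e_inj : injective e by move=> [k1|] [k2|] //= [/val_inj ->].
have P_WD : {in G, forall g, P g \in WD (option (sO O))} := PO_WD.
have e_prf g o : g \in G -> e (prf (P g) o) = omap (prf g) (e o).
  by move=> gG; case: o => [k|]; rewrite /prf /= ?PO_Some ?PO_None //= val_insubd_prf.
have e_flipped g o i : g \in G -> e o = Some i -> (o \in flipped (P g)) = (i \in flipped g).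
  by move=> gG; case: o => [k|] //= [<-]; rewrite inE PO_Some //=; case: (_ \in _).
split; last exact: (transfer_H1 sGD P_WD e_inj e_prf e_flipped H1G).
apply: (transfer_relmin P_WD e_inj e_prf e_flipped None Gmin) => -[//|_].
by exists g_odd => //; rewrite inE PO_None /= odd_g.
Qed.

End OrbitRestriction.

Lemma pr_orbit_stable (I : finType) (G : {group {perm sym I}}) (i0 : I) g i :
  G \subset WD I -> g \in G -> i \in pr_orbit G i0 -> prf g i \in pr_orbit G i0.
Proof.
move=> sGD gG /imsetP[h hG ->]; apply/imsetP; exists (h * g)%g; first by rewrite groupM.
by rewrite prf_mul // WD_WB ?(subsetP sGD).
Qed.

Theorem lemma6p2 (n : nat) (G : {group {perm sym 'I_n}}) (i0 : 'I_n) :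
  G \subset WD 'I_n ->
  condH1 G ->
  relmin G ->
  minimal_cond G ->
  let O := pr_orbit G i0 in
  if [forall g in G, ~~ sigma_odd (gO O g)]
  then relmin (GbarA G O) /\ condH1 (GbarA G O)
  else relmin (GbarB G O) /\ condH1 (GbarB G O).
Proof.
move=> sGD H1G _ Gmin O.
have O_stable g i : g \in G -> i \in O -> prf g i \in O by apply: pr_orbit_stable.
have i0O : i0 \in O by apply/imsetP; exists 1%g; rewrite ?group1 // /prf perm1.
case: ifP => [/forall_inP even_gO | /negbT/forall_inPn[g gG /negbNE odd_g]].
  exact: (GbarA_relmin_H1 sGD O_stable H1G Gmin (Sub i0 i0O) even_gO).
by apply: (GbarB_relmin_H1 sGD O_stable H1G Gmin); exists g.
Qed.
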